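(* Let $\lambda>1$, $A=\mathrm{diag}(1,\lambda)$, and $f(x)=\tfrac12 x^TAx$ on $\mathbb{R}^2$. Consider the iteration $x_{k+1}=x_k-\alpha_kg_k$, $g_k=Ax_k$, where $x_1\in\mathbb{R}^2$, $x_2=x_1-\alpha_1g_1$ for some $\alpha_1>0$, and for $k\ge 2$ $$\alpha_k=\gamma_k\frac{s_{k-1}^Ts_{k-1}}{s_{k-1}^Ty_{k-1}}+(1-\gamma_k)\frac{s_{k-1}^Ty_{k-1}}{y_{k-1}^Ty_{k-1}},\qquad s_{k-1}=x_k-x_{k-1},\ y_{k-1}=g_k-g_{k-1},$$ with $\gamma_k\in(0,1)$ for all $k$. Assume $g_1^{(i)}\neq0$ and $g_2^{(i)}\ne0$ for $i=1,2$. Let $q_k=(g_k^{(1)})^2/(g_k^{(2)})^2$, $M_k=\log q_k$, let $\theta$ be a root of $\theta^2-\theta+2=0$, and $\xi_k=M_k+(\theta-1)M_{k-1}$. If $|\xi_2|>8\log\lambda$, then there exists $c_1>0$ such that for all $k\ge2$, $$\max_{-1\le i\le 3}M_{k+i}\ge(\sqrt2-1)^2 2^{k/2}c_1-2c_1,\qquad \min_{-1\le i\le 3}M_{k+i}\le-(\sqrt2-1)^2 2^{k/2}c_1+2c_1.$$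
   Context: $g_k^{(i)}$ denotes the $i$-th component of $g_k$; under these assumptions all components stay nonzero so $M_k$ is defined for all $k\ge1$. $\theta$ is complex and $|\cdot|$ is the complex modulus. *)

From Stdlib Require Import Reals.
From Coquelicot Require Import Coquelicot.
Open Scope R_scope.

Definition vec2 := (R * R)%type.
Definition dot2 (u v : vec2) : R := fst u * fst v + snd u * snd v.
Definition sub2 (u v : vec2) : vec2 := (fst u - fst v, snd u - snd v).
Definition scal2 (a : R) (u : vec2) : vec2 := (a * fst u, a * snd u).

(* A = diag(1, lambda); gradient of f(x) = 1/2 x^T A x is A x. *)
Definition Amul (lam : R) (u : vec2) : vec2 := (fst u, lam * snd u).

Definition Mval (g : vec2) : R := ln ((fst g) ^ 2 / (snd g) ^ 2).

(* The gradient components evolve as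
   [g_{k+1} = ((1 - alpha_k) g_k^(1), (1 - lam alpha_k) g_k^(2))], and a convex combination of
   the two Barzilai-Borwein steps of [g_{k-1}] forces
   [delta_k := M_{k+1} - M_k + 2 M_{k-1}] into [(0, 2 log lam)].  For
   [xi_k = M_k + (theta - 1) M_{k-1}] this perturbed recurrence reads
   [xi_{k+1} = theta xi_k + delta_k] with [|theta| = sqrt 2], so once [|xi_2|] exceeds the
   fixed point [2 log lam (sqrt 2 + 1)] of [w |-> sqrt 2 w - 2 log lam], [|xi_k|] grows like
   [2^(k/2)].  Finally [|xi_k| <= |M_k| + sqrt 2 |M_{k-1}|], and the sign of [delta] bounds
   [|M_k|] and [|M_{k-1}|] by the maximum of the window [M_{k-1}, ..., M_{k+3}] (and by
   [2 log lam] minus its minimum). *)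

From Stdlib Require Import Reals Lra Lia.
From Coquelicot Require Import Coquelicot.
Open Scope R_scope.

Lemma Rdiv_lt_Rdiv_cross (a b c d : R) :
  0 < b -> 0 < d -> a * d < c * b -> a / b < c / d.
Proof.
  intros Hb Hd H.
  apply Rlt_div_l; [exact Hb|].
  unfold Rdiv; rewrite Rmult_assoc, (Rmult_comm (/ d)), <- Rmult_assoc.
  apply Rlt_div_r; [exact Hd|]; lra.
Qed.

Definition nonzero2 (u : vec2) : Prop := fst u <> 0 /\ snd u <> 0.

Definition bb1 (lam : R) (g : vec2) : R := dot2 g g / dot2 g (Amul lam g).
Definition bb2 (lam : R) (g : vec2) : R :=
  dot2 g (Amul lam g) / dot2 (Amul lam g) (Amul lam g).

Lemma bb_bounds (lam : R) (g : vec2) :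
  1 < lam -> nonzero2 g ->
  1 < lam * bb2 lam g /\ bb2 lam g < bb1 lam g /\ bb1 lam g < 1.
Proof.
  intros Hlam [Ha Hb]; destruct g as [a b]; cbn [fst snd] in Ha, Hb.
  unfold bb1, bb2, dot2, Amul; cbn [fst snd].
  assert (HP : 0 < a * a) by (apply Rsqr_pos_lt; exact Ha).
  assert (HQ : 0 < b * b) by (apply Rsqr_pos_lt; exact Hb).
  set (P := a * a) in *; set (Q := b * b) in *.
  replace (b * (lam * b)) with (lam * Q) by (unfold Q; ring).
  replace (lam * b * (lam * b)) with (lam * lam * Q) by (unfold Q; ring).
  assert (D1 : 0 < P + lam * Q) by nra.
  assert (D2 : 0 < P + lam * lam * Q) by nra.
  repeat split.
  - rewrite Rmult_div_assoc; apply Rlt_div_r; nra.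
  - apply Rdiv_lt_Rdiv_cross; [lra|lra|].
    (* [(P + Q) (P + lam^2 Q) - (P + lam Q)^2 = P Q (lam - 1)^2] *)
    assert (0 < P * Q * ((lam - 1) * (lam - 1))) by (apply Rmult_lt_0_compat; nra).
    nra.
  - apply (Rdiv_lt_1 _ _ D1); nra.
Qed.

Lemma bb_ratio_bounds (lam al : R) (g : vec2) :
  1 < lam -> nonzero2 g -> bb2 lam g < al < bb1 lam g ->
  snd g ^ 2 / fst g ^ 2 < (1 - al) / (lam * al - 1) < lam * (snd g ^ 2 / fst g ^ 2).
Proof.
  intros Hlam Hg [Hal2 Hal1].
  destruct (bb_bounds lam g Hlam Hg) as [Hlb2 _].
  assert (Hlal : 1 < lam * al) by nra.
  destruct g as [a b], Hg as [Ha Hb]; cbn [fst snd] in *.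
  unfold bb1, bb2, dot2, Amul in Hal1, Hal2; cbn [fst snd] in Hal1, Hal2.
  assert (HP : 0 < a ^ 2) by (apply pow2_gt_0; exact Ha).
  assert (HQ : 0 < b ^ 2) by (apply pow2_gt_0; exact Hb).
  replace (a * a) with (a ^ 2) in Hal1, Hal2 by ring.
  replace (b * b) with (b ^ 2) in Hal1 by ring.
  replace (b * (lam * b)) with (lam * b ^ 2) in Hal1, Hal2 by ring.
  replace (lam * b * (lam * b)) with (lam * lam * b ^ 2) in Hal2 by ring.
  apply Rlt_div_r in Hal1; [|nra].
  apply Rlt_div_l in Hal2; [|nra].
  rewrite Rmult_div_assoc.
  split; apply Rdiv_lt_Rdiv_cross; nra.
Qed.

(* The quotient is multiplied by [r^2], [r = (1 - al) / (lam al - 1)], and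
   [bb_ratio_bounds] pins [r] between [1 / q_{k-1}] and [lam / q_{k-1}]. *)
Lemma Mval_step_bounds (lam al : R) (gp g : vec2) :
  1 < lam -> nonzero2 gp -> nonzero2 g -> bb2 lam gp < al < bb1 lam gp ->
  0 < Mval ((1 - al) * fst g, (1 - lam * al) * snd g) - Mval g + 2 * Mval gp
    < 2 * ln lam.
Proof.
  intros Hlam Hnzp [Ha Hb] Hal.
  destruct (bb_bounds lam gp Hlam Hnzp) as [Hlb2 _].
  assert (Hlal : 1 < lam * al) by nra.
  destruct (bb_ratio_bounds lam al gp Hlam Hnzp Hal) as [Hr1 Hr2].
  destruct Hnzp as [Hpa Hpb].
  set (r := (1 - al) / (lam * al - 1)) in *.
  set (q := snd gp ^ 2 / fst gp ^ 2) in *.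
  assert (Hq : 0 < q) by (apply Rdiv_lt_0_compat; apply pow2_gt_0; assumption).
  assert (Hr : 0 < r) by lra.
  assert (Hgp : Mval gp = - ln q).
  { unfold Mval, q; rewrite <- ln_Rinv by exact Hq; f_equal; field; split; assumption. }
  assert (Hg : 0 < fst g ^ 2 / snd g ^ 2)
    by (apply Rdiv_lt_0_compat; apply pow2_gt_0; assumption).
  assert (Hstep : Mval ((1 - al) * fst g, (1 - lam * al) * snd g) = Mval g + 2 * ln r).
  { unfold Mval; cbn [fst snd].
    replace (((1 - al) * fst g) ^ 2 / ((1 - lam * al) * snd g) ^ 2)
      with (fst g ^ 2 / snd g ^ 2 * (r * r))
      by (unfold r; field; repeat split; try assumption; lra).
    rewrite ln_mult, ln_mult by nra; ring. }
  assert (Hlo : ln q < ln r) by (apply ln_increasing; assumption).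
  assert (Hhi : ln r < ln lam + ln q)
    by (rewrite <- ln_mult by lra; apply ln_increasing; assumption).
  rewrite Hstep, Hgp; lra.
Qed.

Lemma Amul_sub2 (lam : R) (u v : vec2) :
  Amul lam (sub2 u v) = sub2 (Amul lam u) (Amul lam v).
Proof. destruct u, v; unfold Amul, sub2; cbn; f_equal; ring. Qed.

Lemma Amul_scal2 (lam a : R) (u : vec2) : Amul lam (scal2 a u) = scal2 a (Amul lam u).
Proof. destruct u; unfold Amul, scal2; cbn; f_equal; ring. Qed.

Lemma dot2_scal2 (a : R) (u v : vec2) : dot2 (scal2 a u) (scal2 a v) = a * a * dot2 u v.
Proof. destruct u, v; unfold dot2, scal2; cbn; ring. Qed.

Section BBIteration.

Variables (lam : R) (x : nat -> vec2) (alpha gamma : nat -> R).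
Hypothesis lam_gt1 : 1 < lam.
Hypothesis x_succ : forall k : nat, (1 <= k)%nat ->
  x (S k) = sub2 (x k) (scal2 (alpha k) (Amul lam (x k))).
Hypothesis alpha_rule : forall k : nat, (2 <= k)%nat ->
  let s := sub2 (x k) (x (k - 1)%nat) in
  let y := sub2 (Amul lam (x k)) (Amul lam (x (k - 1)%nat)) in
  alpha k = gamma k * (dot2 s s / dot2 s y) + (1 - gamma k) * (dot2 s y / dot2 y y).
Hypothesis gamma_range : forall k : nat, (2 <= k)%nat -> 0 < gamma k < 1.

Let g (k : nat) : vec2 := Amul lam (x k).

Lemma grad_succ (k : nat) : (1 <= k)%nat ->
  g (S k) = ((1 - alpha k) * fst (g k), (1 - lam * alpha k) * snd (g k)).
Proof.
  intros Hk; unfold g; rewrite (x_succ k Hk).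
  destruct (x k); unfold Amul, sub2, scal2; cbn; f_equal; ring.
Qed.

(* [s = - alpha k * g k] and [y = A s], so the factor [alpha k ^ 2] cancels in both quotients. *)
Lemma alpha_succ_bb (k : nat) : (1 <= k)%nat -> alpha k <> 0 ->
  alpha (S k) = gamma (S k) * bb1 lam (g k) + (1 - gamma (S k)) * bb2 lam (g k).
Proof.
  intros Hk Ha.
  rewrite (alpha_rule (S k)) by lia; cbv zeta.
  replace (S k - 1)%nat with k by lia.
  assert (Hs : sub2 (x (S k)) (x k) = scal2 (- alpha k) (g k)).
  { unfold g; rewrite (x_succ k Hk); destruct (x k); unfold sub2, scal2; cbn; f_equal; ring. }
  rewrite <- Amul_sub2, Hs, Amul_scal2, !dot2_scal2.
  assert (Ha2 : - alpha k * - alpha k <> 0) by (apply Rmult_integral_contrapositive; lra).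
  unfold bb1, bb2; rewrite !Rdiv_mult_l_l by exact Ha2; reflexivity.
Qed.

Lemma alpha_succ_between (k : nat) : (1 <= k)%nat -> nonzero2 (g k) -> alpha k <> 0 ->
  bb2 lam (g k) < alpha (S k) < bb1 lam (g k).
Proof.
  intros Hk Hg Hal.
  destruct (bb_bounds lam (g k) lam_gt1 Hg) as [_ [H21 _]].
  pose proof (gamma_range (S k) ltac:(lia)) as Hga.
  rewrite (alpha_succ_bb k Hk Hal); split; nra.
Qed.

Hypothesis alpha1_pos : 0 < alpha 1%nat.
Hypothesis g1_nonzero : nonzero2 (g 1%nat).
Hypothesis g2_nonzero : nonzero2 (g 2%nat).

Lemma iterate_nondegenerate (n : nat) :
  nonzero2 (g (S n)) /\ nonzero2 (g (S (S n))) /\ alpha (S n) <> 0.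
Proof.
  induction n as [|n [Hg1 [Hg2 Hal]]].
  - repeat split; try apply g1_nonzero; try apply g2_nonzero; lra.
  - pose proof (alpha_succ_between (S n) ltac:(lia) Hg1 Hal) as Hbetween.
    destruct (bb_bounds lam (g (S n)) lam_gt1 Hg1) as [H2 [_ H1]].
    assert (Hlal : 1 < lam * alpha (S (S n))) by nra.
    assert (Hpos : 0 < alpha (S (S n))) by nra.
    split; [exact Hg2|].
    rewrite (grad_succ (S (S n))) by lia.
    destruct Hg2 as [Ha2 Hb2].
    repeat split; cbn [fst snd]; try apply Rmult_integral_contrapositive; try split;
      try assumption; lra.
Qed.

Lemma Mval_recurrence (n : nat) :
  0 < Mval (g (S (S (S n)))) - Mval (g (S (S n))) + 2 * Mval (g (S n)) < 2 * ln lam.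
Proof.
  destruct (iterate_nondegenerate n) as [Hg1 [Hg2 Hal]].
  rewrite (grad_succ (S (S n))) by lia.
  apply Mval_step_bounds; try assumption.
  apply alpha_succ_between; assumption || lia.
Qed.

End BBIteration.

Lemma root_components (theta : C) :
  (theta * theta - theta + 2 = 0)%C -> Re theta = 1 / 2 /\ Im theta ^ 2 = 7 / 4.
Proof.
  intros Hroot; destruct theta as [u v].
  unfold Cplus, Cminus, Cmult, Copp, RtoC in Hroot; simpl in Hroot.
  injection Hroot as Hre Him; simpl.
  assert (Hv : v <> 0).
  { intros ->. assert (0 <= (u - 1 / 2) * (u - 1 / 2)) by apply Rle_0_sqr. nra. }
  assert (Hu : u = 1 / 2).
  { assert (Huv : (2 * u - 1) * v = 0) by lra.
    destruct (Rmult_integral _ _ Huv); [lra | contradiction]. }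
  split; [exact Hu | subst u; lra].
Qed.

Lemma Cmod_root (theta : C) :
  (theta * theta - theta + 2 = 0)%C -> Cmod theta = sqrt 2 /\ Cmod (theta - 1) = sqrt 2.
Proof.
  intros Hroot; destruct (root_components theta Hroot) as [Hre Him].
  destruct theta as [u v]; cbn [Re Im fst snd] in Hre, Him; subst u.
  unfold Cmod, Cminus, Cplus, Copp, RtoC; cbn [fst snd].
  split; f_equal; nra.
Qed.

Definition xi (theta : C) (M : nat -> R) (k : nat) : C :=
  (RtoC (M k) + (theta - 1) * RtoC (M (k - 1)%nat))%C.

(* [xi] diagonalises the recurrence: [theta (theta - 1) = -2]. *)
Lemma xi_succ (theta : C) (M : nat -> R) (k : nat) :
  (theta * theta - theta + 2 = 0)%C ->
  xi theta M (S k) = (theta * xi theta M k + RtoC (M (S k) - M k + 2 * M (k - 1)%nat))%C.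
Proof.
  intros Hroot; unfold xi; replace (S k - 1)%nat with k by lia.
  rewrite RtoC_plus, RtoC_minus, RtoC_mult.
  replace (theta * (M k + (theta - 1) * M (k - 1)%nat))%C
    with (theta * M k + (theta * theta - theta + 2) * M (k - 1)%nat - 2 * M (k - 1)%nat)%C
    by ring.
  rewrite Hroot; ring.
Qed.

Lemma Cmod_xi_succ_ge (theta : C) (M : nat -> R) (k : nat) :
  (theta * theta - theta + 2 = 0)%C ->
  sqrt 2 * Cmod (xi theta M k) - Rabs (M (S k) - M k + 2 * M (k - 1)%nat)
    <= Cmod (xi theta M (S k)).
Proof.
  intros Hroot; rewrite (xi_succ theta M k Hroot).
  set (d := M (S k) - M k + 2 * M (k - 1)%nat).
  pose proof (Cmod_triangle (theta * xi theta M k + d) (- d)) as Htri.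
  replace (theta * xi theta M k + d + - d)%C with (theta * xi theta M k)%C in Htri by ring.
  rewrite Cmod_opp, Cmod_R, Cmod_mult, (proj1 (Cmod_root theta Hroot)) in Htri.
  lra.
Qed.

Lemma Cmod_xi_le (theta : C) (M : nat -> R) (k : nat) :
  (theta * theta - theta + 2 = 0)%C ->
  Cmod (xi theta M k) <= Rabs (M k) + sqrt 2 * Rabs (M (k - 1)%nat).
Proof.
  intros Hroot; unfold xi.
  rewrite <- (proj2 (Cmod_root theta Hroot)), <- !Cmod_R, <- Cmod_mult.
  apply Cmod_triangle.
Qed.

Lemma geometric_lower_bound (w : nat -> R) (s c : R) :
  0 <= s -> (forall n, s * w n - (s - 1) * c <= w (S n)) ->
  forall n, s ^ n * (w O - c) <= w n - c.
Proof.
  intros Hs Hw n; induction n as [|n IH]; simpl.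
  - lra.
  - specialize (Hw n).
    apply Rmult_le_compat_l with (r := s) in IH; [lra | exact Hs].
Qed.

Lemma window_abs_le (U m0 m1 m2 m3 m4 : R) :
  0 <= m2 - m1 + 2 * m0 -> 0 <= m3 - m2 + 2 * m1 -> 0 <= m4 - m3 + 2 * m2 ->
  m0 <= U -> m1 <= U -> m2 <= U -> m3 <= U -> m4 <= U ->
  Rabs m0 <= U /\ Rabs m1 <= U.
Proof. intros; split; unfold Rabs; destruct Rcase_abs; lra. Qed.

Lemma Rmax5_ub (a b c d e : R) :
  let U := Rmax a (Rmax b (Rmax c (Rmax d e))) in
  a <= U /\ b <= U /\ c <= U /\ d <= U /\ e <= U.
Proof. unfold Rmax; repeat destruct Rle_dec; lra. Qed.

Lemma Rmin5_lb (a b c d e : R) :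
  let U := Rmin a (Rmin b (Rmin c (Rmin d e))) in
  U <= a /\ U <= b /\ U <= c /\ U <= d /\ U <= e.
Proof. unfold Rmin; repeat destruct Rle_dec; lra. Qed.

Lemma Rpower_2_half (k : nat) : Rpower 2 (INR k / 2) = sqrt 2 ^ k.
Proof.
  replace (INR k / 2) with (/ 2 * INR k) by field.
  rewrite <- Rpower_mult, Rpower_sqrt by lra.
  apply Rpower_pow, sqrt_lt_R0; lra.
Qed.

Section PerturbedRecurrence.

Variables (L : R) (theta : C) (M : nat -> R).
Hypothesis theta_root : (theta * theta - theta + 2 = 0)%C.
Hypothesis M_rec : forall n, 0 < M (S (S (S n))) - M (S (S n)) + 2 * M (S n) < 2 * L.

Lemma M_rec_at (j : nat) : (1 <= j)%nat -> 0 <= M (j + 2) - M (j + 1) + 2 * M j <= 2 * L.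
Proof.
  intros Hj; destruct j as [|n]; [lia|].
  replace (S n + 2)%nat with (S (S (S n))) by lia.
  replace (S n + 1)%nat with (S (S n)) by lia.
  pose proof (M_rec n); lra.
Qed.

Lemma M_rec_window (k : nat) : (2 <= k)%nat ->
  0 <= M (k + 1)%nat - M k + 2 * M (k - 1)%nat <= 2 * L /\
  0 <= M (k + 2)%nat - M (k + 1)%nat + 2 * M k <= 2 * L /\
  0 <= M (k + 3)%nat - M (k + 2)%nat + 2 * M (k + 1)%nat <= 2 * L.
Proof.
  intros Hk.
  pose proof (M_rec_at (k - 1) ltac:(lia)) as R0.
  pose proof (M_rec_at k ltac:(lia)) as R1.
  pose proof (M_rec_at (k + 1) ltac:(lia)) as R2.
  replace (k - 1 + 2)%nat with (k + 1)%nat in R0 by lia.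
  replace (k - 1 + 1)%nat with k in R0 by lia.
  replace (k + 1 + 2)%nat with (k + 3)%nat in R2 by lia.
  replace (k + 1 + 1)%nat with (k + 2)%nat in R2 by lia.
  repeat split; lra.
Qed.

Lemma Cmod_xi_growth (k : nat) :
  (2 <= k)%nat -> sqrt 2 * Cmod (xi theta M k) - 2 * L <= Cmod (xi theta M (S k)).
Proof.
  intros Hk.
  pose proof (Cmod_xi_succ_ge theta M k theta_root) as Hge.
  destruct (M_rec_window k Hk) as [Hrec _].
  replace (k + 1)%nat with (S k) in Hrec by lia.
  rewrite Rabs_pos_eq in Hge; lra.
Qed.

Let c := 2 * L * (sqrt 2 + 1).

Lemma Cmod_xi_lower_bound (n : nat) :
  sqrt 2 ^ n * (Cmod (xi theta M 2) - c) <= Cmod (xi theta M (n + 2)) - c.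
Proof.
  apply (geometric_lower_bound (fun n => Cmod (xi theta M (n + 2)))).
  - apply sqrt_pos.
  - intros m; replace (S m + 2)%nat with (S (m + 2)) by lia.
    replace ((sqrt 2 - 1) * c) with (2 * L)
      by (unfold c; ring_simplify; rewrite pow2_sqrt by lra; ring).
    apply Cmod_xi_growth; lia.
Qed.

Lemma Cmod_xi_le_window_max (k : nat) :
  (2 <= k)%nat ->
  Cmod (xi theta M k) <= (1 + sqrt 2) *
    Rmax (M (k - 1)%nat)
      (Rmax (M k) (Rmax (M (k + 1)%nat) (Rmax (M (k + 2)%nat) (M (k + 3)%nat)))).
Proof.
  intros Hk.
  destruct (Rmax5_ub (M (k - 1)%nat) (M k) (M (k + 1)%nat) (M (k + 2)%nat) (M (k + 3)%nat))
    as [u0 [u1 [u2 [u3 u4]]]].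
  set (U := Rmax _ _) in *.
  destruct (M_rec_window k Hk) as [R0 [R1 R2]].
  destruct (window_abs_le U (M (k - 1)%nat) (M k) (M (k + 1)%nat) (M (k + 2)%nat) (M (k + 3)%nat))
    as [A0 A1]; try lra.
  pose proof (Cmod_xi_le theta M k theta_root).
  pose proof (sqrt_pos 2).
  nra.
Qed.

Lemma Cmod_xi_le_window_min (k : nat) :
  (2 <= k)%nat ->
  Cmod (xi theta M k) <= (1 + sqrt 2) *
    (2 * L - Rmin (M (k - 1)%nat)
               (Rmin (M k) (Rmin (M (k + 1)%nat) (Rmin (M (k + 2)%nat) (M (k + 3)%nat))))).
Proof.
  intros Hk.
  destruct (Rmin5_lb (M (k - 1)%nat) (M k) (M (k + 1)%nat) (M (k + 2)%nat) (M (k + 3)%nat))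
    as [u0 [u1 [u2 [u3 u4]]]].
  set (V := Rmin _ _) in *.
  destruct (M_rec_window k Hk) as [R0 [R1 R2]].
  (* [L - M] satisfies the same recurrence, with [2 L - delta] in place of [delta]. *)
  destruct (window_abs_le (L - V) (L - M (k - 1)%nat) (L - M k) (L - M (k + 1)%nat)
              (L - M (k + 2)%nat) (L - M (k + 3)%nat)) as [A0 A1]; try lra.
  assert (B0 : Rabs (M (k - 1)%nat) <= 2 * L - V)
    by (revert A0; unfold Rabs; do 2 destruct Rcase_abs; lra).
  assert (B1 : Rabs (M k) <= 2 * L - V)
    by (revert A1; unfold Rabs; do 2 destruct Rcase_abs; lra).
  pose proof (Cmod_xi_le theta M k theta_root).
  pose proof (sqrt_pos 2).
  nra.
Qed.

Theorem window_extrema_bounds :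
  Cmod (xi theta M 2) > 8 * L ->
  exists c1 : R, 0 < c1 /\
    forall k : nat, (2 <= k)%nat ->
      Rmax (M (k - 1)%nat) (Rmax (M k) (Rmax (M (k + 1)%nat)
        (Rmax (M (k + 2)%nat) (M (k + 3)%nat))))
        >= (sqrt 2 - 1) ^ 2 * Rpower 2 (INR k / 2) * c1 - 2 * c1 /\
      Rmin (M (k - 1)%nat) (Rmin (M k) (Rmin (M (k + 1)%nat)
        (Rmin (M (k + 2)%nat) (M (k + 3)%nat))))
        <= - ((sqrt 2 - 1) ^ 2 * Rpower 2 (INR k / 2) * c1) + 2 * c1.
Proof.
  intros Hxi2.
  assert (HL : 0 < L) by (pose proof (M_rec 0); lra).
  pose proof (sqrt_pos 2) as Hs0.
  assert (Hs2 : sqrt 2 * sqrt 2 = 2) by (apply sqrt_sqrt; lra).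
  assert (Hs : 1 < sqrt 2 < 3 / 2) by (split; nra).
  set (E0 := Cmod (xi theta M 2) - c).
  assert (HE0 : 0 < E0) by (unfold E0, c; nra).
  exists (E0 / 2); split; [lra|].
  intros k Hk.
  pose proof (Cmod_xi_lower_bound (k - 2)) as Hlow.
  replace (k - 2 + 2)%nat with k in Hlow by lia.
  pose proof (Cmod_xi_le_window_max k Hk) as Hmax.
  pose proof (Cmod_xi_le_window_min k Hk) as Hmin.
  set (U := Rmax _ _) in *; set (V := Rmin _ _) in *.
  assert (Hpow : Rpower 2 (INR k / 2) = 2 * sqrt 2 ^ (k - 2)).
  { rewrite Rpower_2_half; replace k with (2 + (k - 2))%nat at 1 by lia.
    rewrite pow_add, pow2_sqrt by lra; ring. }
  rewrite Hpow; fold E0 in Hlow.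
  set (t := sqrt 2 ^ (k - 2) * E0) in *.
  assert (Ht : 0 <= t) by (apply Rmult_le_pos; [apply pow_le|]; lra).
  assert (Hsq : (sqrt 2 - 1) ^ 2 * t <= (sqrt 2 - 1) * t).
  { assert (0 <= (sqrt 2 - 1) * (2 - sqrt 2) * t)
      by (apply Rmult_le_pos; [apply Rmult_le_pos|]; lra).
    nra. }
  assert (Hc : (sqrt 2 - 1) * c = 2 * L) by (unfold c; nra).
  replace ((sqrt 2 - 1) ^ 2 * (2 * sqrt 2 ^ (k - 2)) * (E0 / 2)) with ((sqrt 2 - 1) ^ 2 * t)
    by (unfold t; field).
  assert (Hinv : forall a b, (1 + sqrt 2) * a >= b -> a >= (sqrt 2 - 1) * b).
  { intros a b Hab.
    apply Rmult_ge_compat_l with (r := sqrt 2 - 1) in Hab; [|lra].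
    replace ((sqrt 2 - 1) * ((1 + sqrt 2) * a)) with ((sqrt 2 * sqrt 2 - 1) * a) in Hab by ring.
    rewrite Hs2 in Hab; lra. }
  assert (HU : U >= (sqrt 2 - 1) * t) by (apply Hinv; unfold c in Hlow; nra).
  assert (HV : 2 * L - V >= (sqrt 2 - 1) * (c + t)) by (apply Hinv; lra).
  split; nra.
Qed.

End PerturbedRecurrence.

Theorem lemma2 (lam : R) (x : nat -> vec2) (alpha gamma : nat -> R) (theta : C) :
  1 < lam ->
  (* iteration x_{k+1} = x_k - alpha_k g_k, g_k = A x_k, for k >= 1 *)
  (forall k : nat, (1 <= k)%nat ->
     x (S k) = sub2 (x k) (scal2 (alpha k) (Amul lam (x k)))) ->
  0 < alpha 1%nat ->
  (* step-size rule for k >= 2 *)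
  (forall k : nat, (2 <= k)%nat ->
     let s := sub2 (x k) (x (k - 1)%nat) in
     let y := sub2 (Amul lam (x k)) (Amul lam (x (k - 1)%nat)) in
     alpha k = gamma k * (dot2 s s / dot2 s y)
               + (1 - gamma k) * (dot2 s y / dot2 y y)) ->
  (forall k : nat, (2 <= k)%nat -> 0 < gamma k < 1) ->
  fst (Amul lam (x 1%nat)) <> 0 -> snd (Amul lam (x 1%nat)) <> 0 ->
  fst (Amul lam (x 2%nat)) <> 0 -> snd (Amul lam (x 2%nat)) <> 0 ->
  (* theta is a (complex) root of theta^2 - theta + 2 = 0 *)
  Cplus (Cminus (Cmult theta theta) theta) (RtoC 2) = RtoC 0 ->
  (* |xi_2| > 8 log lambda, xi_k = M_k + (theta - 1) M_{k-1} *)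
  Cmod (Cplus (RtoC (Mval (Amul lam (x 2%nat))))
              (Cmult (Cminus theta (RtoC 1)) (RtoC (Mval (Amul lam (x 1%nat))))))
    > 8 * ln lam ->
  exists c1 : R, 0 < c1 /\
    forall k : nat, (2 <= k)%nat ->
      let M := fun j : nat => Mval (Amul lam (x j)) in
      Rmax (M (k - 1)%nat) (Rmax (M k) (Rmax (M (k + 1)%nat)
        (Rmax (M (k + 2)%nat) (M (k + 3)%nat))))
        >= (sqrt 2 - 1) ^ 2 * Rpower 2 (INR k / 2) * c1 - 2 * c1 /\
      Rmin (M (k - 1)%nat) (Rmin (M k) (Rmin (M (k + 1)%nat)
        (Rmin (M (k + 2)%nat) (M (k + 3)%nat))))
        <= - ((sqrt 2 - 1) ^ 2 * Rpower 2 (INR k / 2) * c1) + 2 * c1.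
Proof.
  intros Hlam Hx Ha1 Hal Hga Hg1a Hg1b Hg2a Hg2b Hroot Hxi.
  apply (window_extrema_bounds (ln lam) theta (fun j => Mval (Amul lam (x j))) Hroot).
  - intros n.
    exact (Mval_recurrence lam x alpha gamma Hlam Hx Hal Hga Ha1
             (conj Hg1a Hg1b) (conj Hg2a Hg2b) n).
  - exact Hxi.
Qed.
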